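(* Let $A,B,S\in\mathbb T$ and let $\boldsymbol\mu$ be a ratio set that witnesses $B$ or witnesses $S$. If $A\prec^{\boldsymbol\mu}B$, then $AS\prec^{\boldsymbol\mu}BS$. If $A\preccurlyeq^{\boldsymbol\mu}B$, then $AS\preccurlyeq^{\boldsymbol\mu}BS$.
   Context: $\mathbb T$ is the field of real grid-based transseries over the totally ordered group $\mathfrak G$ of transmonomials; $\operatorname{mag}T$ is the dominant monomial of $T\ne0$. A ratio set is a finite $\boldsymbol\mu\subset\{\mathfrak g\in\mathfrak G:\mathfrak g\prec1\}$; $\boldsymbol\mu^*$ (resp. $\boldsymbol\mu^+$) is the set of products of zero or more (resp. one or more) elements of $\boldsymbol\mu$. Monomials: $\mathfrak m\preccurlyeq^{\boldsymbol\mu}\mathfrak n$ iff $\mathfrak m/\mathfrak n\in\boldsymbol\mu^*$, $\mathfrak m\prec^{\boldsymbol\mu}\mathfrak n$ iff $\mathfrak m/\mathfrak n\in\boldsymbol\mu^+$. Transseries: $A\prec^{\boldsymbol\mu}B$ (resp. $\preccurlyeq^{\boldsymbol\mu}$) iff every $\mathfrak a\in\operatorname{supp}A$ satisfies $\mathfrak a\prec^{\boldsymbol\mu}\mathfrak b$ (resp. $\preccurlyeq^{\boldsymbol\mu}$) for some $\mathfrak b\in\operatorname{supp}B$. $\boldsymbol\mu$ witnesses nonzero $T$ iff $\operatorname{supp}T\subseteq(\operatorname{mag}T)\boldsymbol\mu^*$. *)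

From HB Require Import structures.
From mathcomp Require Import all_boot all_order all_algebra.
From mathcomp Require Import boolp classical_sets functions fsbigop reals.
Set Implicit Arguments. Unset Strict Implicit. Unset Printing Implicit Defensive.
Import Order.TTheory GRing.Theory Num.Theory.
Local Open Scope ring_scope.
Local Open Scope classical_set_scope.

(* The monomial group is written ADDITIVELY: monomial product m*n is m + n,
   the monomial 1 is 0, and m/n is m - n.  [lt m n] is  m ≺ n. *)
Section Transseries.
Variables (G : zmodType) (lt : rel G).

Definition ordered_group : Prop :=
  [/\ (forall m, ~~ lt m m),
      (forall m n p, lt m n -> lt n p -> lt m p),
      (forall m n, [\/ lt m n, m = n | lt n m]) &
      (forall m n p, lt m n -> lt (m + p) (n + p))].

Definition ratio_set (mu : seq G) : Prop := all (fun g => lt g 0) mu.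

Definition in_star (mu : seq G) (g : G) : Prop :=
  exists s : seq G, all (fun x => x \in mu) s /\ g = \sum_(x <- s) x.
Definition in_plus (mu : seq G) (g : G) : Prop :=
  exists s : seq G, s != [::] /\ all (fun x => x \in mu) s /\ g = \sum_(x <- s) x.

Variable R : realType.

Definition supp (T : G -> R) : set G := [set m | T m != 0].

Definition grid_based (T : G -> R) : Prop :=
  exists (ms mu : seq G), ratio_set mu /\
    forall g, T g != 0 -> exists2 m, m \in ms & in_star mu (g - m).

(* product of series (the sum is finite for grid-based series) *)
Definition ser_mul (A B : G -> R) : G -> R :=
  fun g => \sum_(p \in [set p : G * G | p.1 + p.2 = g]) (A p.1 * B p.2).

Definition is_mag (T : G -> R) (m : G) : Prop :=
  T m != 0 /\ forall n, T n != 0 -> lt n m || (n == m).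
Definition mag (T : G -> R) : G := xget 0 (is_mag T).

Definition witnesses (mu : seq G) (T : G -> R) : Prop :=
  (exists g, T g != 0) /\ forall n, T n != 0 -> in_star mu (n - mag T).

Definition mle (mu : seq G) (m n : G) : Prop := in_star mu (m - n).
Definition mlt (mu : seq G) (m n : G) : Prop := in_plus mu (m - n).

Definition sle (mu : seq G) (A B : G -> R) : Prop :=
  forall a, A a != 0 -> exists b, B b != 0 /\ mle mu a b.
Definition slt (mu : seq G) (A B : G -> R) : Prop :=
  forall a, A a != 0 -> exists b, B b != 0 /\ mlt mu a b.
End Transseries.

From HB Require Import structures.
From mathcomp Require Import all_boot all_order all_algebra.
From mathcomp Require Import boolp classical_sets functions fsbigop reals.
Set Implicit Arguments. Unset Strict Implicit. Unset Printing Implicit Defensive.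
Import Order.TTheory GRing.Theory Num.Theory.
Local Open Scope ring_scope.

(* Grid-based supports are well ordered for the reverse of ≼, so every
   nonempty grid-based set of monomials has a ≼-largest element.  Take a term
   a s of AS, and b in supp B with a ≺^mu b (resp. ≼^mu).  If mu witnesses B,
   let s' be the largest monomial of supp S with s ≼^mu s'.  Any pair with
   b1 s1 = (mag B) s' has b1 = (mag B) d with d in mu^*, so s1 = s'/d is both
   ≽ s' and still ≽^mu s, whence s1 = s' by maximality.  So (mag B) s' arises
   from a single pair, lies in supp BS, and a s ≺^mu b s ≼^mu (mag B) s'.
   The case where mu witnesses S is symmetric. *)

Lemma in_star0 (G : zmodType) (mu : seq G) : in_star mu 0.
Proof. by exists [::]; rewrite big_nil. Qed.

Lemma in_star1 (G : zmodType) (mu : seq G) x : x \in mu -> in_star mu x.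
Proof. by move=> xmu; exists [:: x]; rewrite /= xmu big_seq1. Qed.

Lemma in_starD (G : zmodType) (mu : seq G) a b :
  in_star mu a -> in_star mu b -> in_star mu (a + b).
Proof.
by move=> [s [smu ->]] [t [tmu ->]]; exists (s ++ t); rewrite all_cat smu tmu big_cat.
Qed.

Lemma in_plusD (G : zmodType) (mu : seq G) a b :
  in_plus mu a -> in_star mu b -> in_plus mu (a + b).
Proof.
move=> [s [s0 [smu ->]]] [t [tmu ->]]; exists (s ++ t).
by rewrite all_cat smu tmu big_cat; case: s s0 {smu}.
Qed.

Lemma in_starMn (G : zmodType) (mu : seq G) x k :
  in_star mu x -> in_star mu (x *+ k).
Proof.
move=> xmu; elim: k => [|k IHk]; first by rewrite mulr0n; apply: in_star0.
by rewrite mulrS; apply: in_starD.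
Qed.

Lemma in_star_sub (G : zmodType) (mu nu : seq G) g :
  {subset mu <= nu} -> in_star mu g -> in_star nu g.
Proof. by move=> sub [s [smu ->]]; exists s; split=> //; apply: sub_all smu. Qed.

Lemma in_star_cons (G : zmodType) (x : G) mu g :
  in_star (x :: mu) g -> exists k : nat, in_star mu (g - x *+ k).
Proof.
move=> [s [+ ->]]; elim: s => [|y s IHs] /=.
  by exists 0%N; rewrite big_nil subrr; apply: in_star0.
rewrite inE big_cons => /andP[/orP[/eqP-> | ymu] /IHs[k smu]].
  by exists k.+1; rewrite mulrS opprD addrACA subrr add0r.
by exists k; rewrite -addrA; apply: in_starD => //; apply: in_star1.
Qed.

Lemma tail_min (k : nat -> nat) i :
  exists j, (i < j)%N /\ forall j', (i < j')%N -> (k j <= k j')%N.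
Proof.
have hk : exists v, `[< exists2 j, (i < j)%N & k j = v >].
  by exists (k i.+1); apply/asboolP; exists i.+1.
case: (ex_minnP hk) => _ /asboolP[j ij <-] kj_min.
by exists j; split=> // j' ij'; apply: kj_min; apply/asboolP; exists j'.
Qed.

Lemma nondecreasing_subseq (k : nat -> nat) :
  exists phi : nat -> nat,
    forall n, (phi n < phi n.+1)%N /\ (k (phi n) <= k (phi n.+1))%N.
Proof.
have /(_ _)/cid next := tail_min k.
pose phi := fix phi n := if n is n'.+1 then sval (next (phi n')) else 0%N.
exists (phi \o S) => n /=.
have [lt_n_next min_next] := svalP (next (phi n)).
have [lt_next _] := svalP (next (sval (next (phi n)))).
by split=> //; apply/min_next/(ltn_trans lt_n_next).
Qed.

Section OrderedGroup.
Variables (G : zmodType) (lt : rel G).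
Hypothesis og : ordered_group lt.

Definition lteq (a b : G) := lt a b || (a == b).

Lemma lt_irr m : ~~ lt m m.
Proof. by case: og. Qed.

Lemma lt_trans m n p : lt m n -> lt n p -> lt m p.
Proof. by case: og => _ trans _ _; apply: trans. Qed.

Lemma lt_addr m n p : lt m n -> lt (m + p) (n + p).
Proof. by case: og => _ _ _ addr; apply: addr. Qed.

Lemma lt_add2r p m n : lt (m + p) (n + p) = lt m n.
Proof.
by apply/idP/idP => [/(lt_addr (- p))|]; rewrite ?addrK //; apply: lt_addr.
Qed.

Lemma subr_lt0 a b : lt (a - b) 0 = lt a b.
Proof. by rewrite -(lt_add2r b) subrK add0r. Qed.

Lemma lteqxx a : lteq a a.
Proof. by rewrite /lteq eqxx orbT. Qed.

Lemma lteqNlt a b : lteq b a = ~~ lt a b.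
Proof.
have ltF m n : lt m n -> lt n m -> False.
  by move=> mn /(lt_trans mn); apply/negP/lt_irr.
rewrite /lteq; case: (og) => _ _ total _; case: (total a b) => [ab|->|ba].
- rewrite ab; apply/negbTE/negP => /orP[/(ltF _ _ ab)//|/eqP ba].
  by move: ab; rewrite ba; apply/negP/lt_irr.
- by rewrite eqxx orbT (negbTE (lt_irr b)).
- by rewrite ba; apply/esym/negP => /(ltF _ _ ba).
Qed.

Lemma lteq_trans a b c : lteq a b -> lteq b c -> lteq a c.
Proof.
move=> /orP[ab|/eqP->] // /orP[bc|/eqP<-]; rewrite /lteq ?ab //.
by rewrite (lt_trans ab bc).
Qed.

Lemma lteq_lt_trans a b c : lteq a b -> lt b c -> lt a c.
Proof. by move=> /orP[ab|/eqP->] // /(lt_trans ab). Qed.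

Lemma lteq_anti a b : lteq a b -> lteq b a -> a = b.
Proof.
move=> /orP[ab|/eqP//] /orP[ba|/eqP//].
by have := lt_irr a; rewrite (lt_trans ab ba).
Qed.

Lemma lteq_add2r p a b : lteq (a + p) (b + p) = lteq a b.
Proof. by rewrite /lteq lt_add2r (inj_eq (addIr p)). Qed.

Lemma lteq_add a b c d : lteq a b -> lteq c d -> lteq (a + c) (b + d).
Proof.
move=> ab cd; apply: (@lteq_trans _ (b + c)); first by rewrite lteq_add2r.
by rewrite ![b + _]addrC lteq_add2r.
Qed.

Lemma in_star_le0 mu g : ratio_set lt mu -> in_star mu g -> lteq g 0.
Proof.
move=> mu_lt0 [s [+ ->]]; elim: s => [|x s IHs] /=; first by rewrite big_nil lteqxx.
move=> /andP[xmu smu]; rewrite big_cons -[X in lteq _ X]addr0.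
by apply: lteq_add (IHs smu); rewrite /lteq (allP mu_lt0 x xmu).
Qed.

Lemma increasing_seq_lt (f : nat -> G) :
  (forall i, lt (f i) (f i.+1)) -> forall i j, (i < j)%N -> lt (f i) (f j).
Proof.
move=> incr i; elim=> [|j IHj] //; rewrite ltnS leq_eqVlt => /orP[/eqP->//|/IHj].
by move/lt_trans; apply.
Qed.

(* Dickson's lemma in disguise: along a subsequence where the multiplicity of
   the first ratio x does not decrease, the remainders in the star of the
   remaining ratios would increase strictly. *)
Lemma in_star_no_increasing_seq mu (f : nat -> G) :
  ratio_set lt mu -> (forall i, in_star mu (f i)) -> ~ (forall i, lt (f i) (f i.+1)).
Proof.
elim: mu f => [|x mu IHmu] f /=.
  move=> _ f0 /(_ 0%N).
  have e i : f i = 0 by case: (f0 i) => -[|y s] [//= _ ->]; rewrite big_nil.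
  by rewrite !e; apply/negP/lt_irr.
move=> /andP[x_lt0 mu_lt0] fmu incr.
have /(_ _)/cid mult := fun i => in_star_cons (fmu i).
pose k i := sval (mult i).
have [phi phi_incr] := nondecreasing_subseq k.
apply: (IHmu (fun n => f (phi n) - x *+ k (phi n)) mu_lt0) => [n|n].
  exact: svalP (mult (phi n)).
have [lt_phi le_k] := phi_incr n; rewrite /=.
set a := phi n in lt_phi le_k *; set b := phi n.+1 in lt_phi le_k *.
apply: contraT; rewrite -lteqNlt => le_rem.
have xk_le0 : lteq (x *+ (k b - k a)) 0.
  apply: (@in_star_le0 [:: x]); first by rewrite /ratio_set /= x_lt0.
  by apply/in_starMn/in_star1/mem_head.
have le_fba : lteq (f b) (f a).
  have fbE : f b = f b - x *+ k b + x *+ (k b - k a) + x *+ k a.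
    by rewrite -addrA -mulrnDr subnK // subrK.
  rewrite fbE -[f a](subrK (x *+ k a)) lteq_add2r -[X in lteq _ X]addr0.
  exact: lteq_add.
by have := lteq_lt_trans le_fba (increasing_seq_lt incr lt_phi); rewrite (negbTE (lt_irr _)).
Qed.

Lemma cone_has_max mu M (X : set G) :
  ratio_set lt mu -> (forall g, X g -> in_star mu (g - M)) -> (exists g, X g) ->
  exists2 x, X x & forall y, X y -> lteq y x.
Proof.
move=> mu_lt0 XM [x0 Xx0]; apply: contrapT => no_max.
have next x : exists y, X x -> X y /\ lt x y.
  have [Xx|] := pselect (X x); last by exists x.
  apply: contrapT => no_next; apply: no_max; exists x => // y Xy.
  by rewrite lteqNlt; apply/negP => xy; apply: no_next; exists y.
have /(_ _)/cid nx := next.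
pose f n := iter n (fun x => sval (nx x)) x0.
have Xf n : X (f n) by elim: n => [|n IHn] //=; case: (svalP (nx _) IHn).
apply: (in_star_no_increasing_seq (f := fun n => f n - M) mu_lt0) => [n|n].
  exact: XM.
by rewrite lt_add2r; case: (svalP (nx _) (Xf n)).
Qed.

Lemma seq_has_max (ms : seq G) m0 :
  m0 \in ms -> exists2 M, M \in ms & forall m, m \in ms -> lteq m M.
Proof.
elim: ms m0 => [|a ms IHms] // m0 _.
case: ms IHms => [|m1 ms] IHms.
  by exists a; rewrite ?mem_head // => m; rewrite inE => /eqP->; apply: lteqxx.
have [M Mms maxM] := IHms m1 (mem_head _ _).
have [aM|] := boolP (lt a M).
  exists M; first by rewrite inE Mms orbT.
  by move=> m; rewrite inE => /orP[/eqP->|/maxM//]; rewrite /lteq aM.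
rewrite -lteqNlt => Ma; exists a; first exact: mem_head.
by move=> m; rewrite inE => /orP[/eqP->|/maxM/lteq_trans]; [apply: lteqxx|apply].
Qed.

(* Shifting every generator m of the grid to the largest one M adds the
   ratios m - M to mu, and turns the grid into a single cone. *)
Lemma grid_has_max mu (ms : seq G) (X : set G) :
  ratio_set lt mu -> (forall g, X g -> exists2 m, m \in ms & in_star mu (g - m)) ->
  (exists g, X g) -> exists2 x, X x & forall y, X y -> lteq y x.
Proof.
move=> mu_lt0 Xms [g0 Xg0].
have [m0 m0ms _] := Xms g0 Xg0.
have [M Mms maxM] := seq_has_max m0ms.
pose nu := mu ++ [seq m - M | m <- ms & lt m M].
apply: (@cone_has_max nu M); last by exists g0.
  rewrite /ratio_set all_cat mu_lt0; apply/allP => y /mapP[m].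
  by rewrite mem_filter => /andP[mM _] ->; rewrite subr_lt0.
move=> g /Xms[m mms gm]; rewrite -(subrK m g) -addrA.
apply: in_starD; first by apply: in_star_sub gm => y ymu; rewrite mem_cat ymu.
case/orP: (maxM m mms) => [mM|/eqP->]; last by rewrite subrr; apply: in_star0.
apply/in_star1; rewrite mem_cat; apply/orP; right.
by apply: (map_f (fun m => m - M)); rewrite mem_filter mM.
Qed.

Local Open Scope classical_set_scope.

Variables (R : realType) (mu : seq G).
Hypothesis mu_lt0 : ratio_set lt mu.

Lemma ser_mul_neq0 (X Y : G -> R) g :
  ser_mul X Y g != 0 -> exists p1 p2, [/\ p1 + p2 = g, X p1 != 0 & Y p2 != 0].
Proof.
apply: contraNP => no_pair; apply/eqP; rewrite /ser_mul fsbig1 // => p /= e.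
apply: contrapT => /eqP; rewrite mulf_eq0 negb_or => /andP[X1 Y2].
by apply: no_pair; exists p.1, p.2.
Qed.

Lemma ser_mul_unique_pair (X Y : G -> R) p1 p2 :
  X p1 != 0 -> Y p2 != 0 ->
  (forall q1 q2, q1 + q2 = p1 + p2 -> X q1 != 0 -> Y q2 != 0 -> q1 = p1) ->
  ser_mul X Y (p1 + p2) != 0.
Proof.
move=> X1 Y2 uniq; rewrite /ser_mul fsbig_supp.
suff -> : [set p : G * G | p.1 + p.2 = p1 + p2] `&`
    (fun p : G * G => X p.1 * Y p.2) @^-1` [set~ 0] = [set (p1, p2)].
  by rewrite fsbig_set1 /= mulf_neq0.
apply/seteqP; split => [[q1 q2] /= [e]|[q1 q2] /= [-> ->]]; last first.
  by split=> //; apply/eqP; rewrite mulf_neq0.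
move=> /eqP; rewrite mulf_eq0 negb_or => /andP[Xq1 Yq2].
have eq1 := uniq _ _ e Xq1 Yq2; subst q1.
by congr pair; apply: (addrI p1).
Qed.

Lemma witness_mag (T : G -> R) :
  grid_based lt T -> witnesses lt mu T ->
  T (mag lt T) != 0 /\ forall n, T n != 0 -> in_star mu (n - mag lt T).
Proof.
move=> [ms [nu [nu_lt0 Tms]]] [Tneq0 Tmu]; split => //.
have [m Tm maxm] := @grid_has_max nu ms (fun g => T g != 0) nu_lt0 Tms Tneq0.
by have /(xgetPex 0)[] : exists x, is_mag lt T x by exists m; split=> // n /maxm.
Qed.

Lemma unique_pair_at_mag (T U : G -> R) u :
  grid_based lt T -> witnesses lt mu T -> grid_based lt U -> U u != 0 ->
  exists u', [/\ U u' != 0, in_star mu (u - u') &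
    forall q1 q2, T q1 != 0 -> U q2 != 0 -> q1 + q2 = mag lt T + u' ->
      q1 = mag lt T /\ q2 = u'].
Proof.
move=> gT wT [ms [nu [nu_lt0 Ums]]] Uu.
have [Tmag Tmu] := witness_mag gT wT; set M := mag lt T in Tmag Tmu *.
have Zu : U u != 0 /\ in_star mu (u - u) by rewrite subrr; split=> //; apply: in_star0.
have [u' [Uu' uu'] maxu'] := @grid_has_max nu ms
  (fun t => U t != 0 /\ in_star mu (u - t)) nu_lt0 (fun g h => Ums g h.1) (ex_intro _ u Zu).
exists u'; split=> // q1 q2 Tq1 Uq2 e.
have q2E : q2 = u' - (q1 - M) by rewrite opprB addrA (addrC u') -e addrC addKr.
have q2_le : lteq q2 u'.
  apply: maxu'; split=> //; rewrite q2E opprB addrCA addrC.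
  by apply: in_starD => //; apply: Tmu.
have le_q2 : lteq u' q2.
  by have := lteq_add (lteqxx q2) (in_star_le0 mu_lt0 (Tmu _ Tq1)); rewrite q2E subrK addr0.
have eq2 := lteq_anti q2_le le_q2; split=> //.
by apply: (addIr q2); rewrite e eq2.
Qed.

Lemma ser_mul_dominated (A B S : G -> R) (P : G -> Prop) :
  grid_based lt B -> grid_based lt S ->
  witnesses lt mu B \/ witnesses lt mu S ->
  (forall a b, P a -> in_star mu b -> P (a + b)) ->
  (forall a, A a != 0 -> exists b, B b != 0 /\ P (a - b)) ->
  forall g, ser_mul A S g != 0 -> exists b, ser_mul B S b != 0 /\ P (g - b).
Proof.
move=> gB gS wBS P_star AB g /ser_mul_neq0[a [s [<- Aa Ss]]].
have [b [Bb Pab]] := AB a Aa.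
case: wBS => [wB|wS].
- have [s' [Ss' ss' uniq]] := unique_pair_at_mag gB wB gS Ss.
  have [Bmag Bmu] := witness_mag gB wB.
  exists (mag lt B + s'); split.
    by apply: ser_mul_unique_pair => // q1 q2 e Bq1 Sq2; case: (uniq q1 q2).
  have -> : a + s - (mag lt B + s') = (a - b) + ((b - mag lt B) + (s - s')).
    by rewrite (addrACA b) -opprD [in RHS]addrA (addrA (a - b)) subrK.
  by apply: P_star => //; apply: in_starD => //; apply: Bmu.
- have [b' [Bb' bb' uniq]] := unique_pair_at_mag gS wS gB Bb.
  have [Smag Smu] := witness_mag gS wS.
  exists (b' + mag lt S); split.
    apply: ser_mul_unique_pair => // q1 q2 e Bq1 Sq2.
    by case: (uniq q2 q1) => //; rewrite addrC e addrC.
  have -> : a + s - (b' + mag lt S) = (a - b) + ((b - b') + (s - mag lt S)).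
    by rewrite (addrACA b) -opprD [in RHS]addrA (addrA (a - b)) subrK.
  by apply: P_star => //; apply: in_starD => //; apply: Smu.
Qed.

End OrderedGroup.

Theorem proposition3p6 (G : zmodType) (lt : rel G) (R : realType)
    (mu : seq G) (A B S : G -> R) :
  ordered_group lt ->
  ratio_set lt mu ->
  grid_based lt A -> grid_based lt B -> grid_based lt S ->
  witnesses lt mu B \/ witnesses lt mu S ->
  (slt mu A B -> slt mu (ser_mul A S) (ser_mul B S)) /\
  (sle mu A B -> sle mu (ser_mul A S) (ser_mul B S)).
Proof.
move=> og mu_lt0 _ gB gS wBS; split=> AB.
  by apply: (ser_mul_dominated og mu_lt0 gB gS wBS) => // a b; apply: in_plusD.
by apply: (ser_mul_dominated og mu_lt0 gB gS wBS) => // a b; apply: in_starD.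
Qed.
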